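(* Assume CH. Let $\mathcal L$ be a finite relational signature, $\mathscr D$ a nonprincipal ultrafilter over $\omega$, $(\mathcal M_t)_{t\in\omega}$ a $\mathscr D$-trending sequence of finite $\mathcal L$-structures, $\mathfrak M^*=\prod_t\mathcal M_t/\mathscr D$, and $\mathcal A\in\mathrm{age}(\mathfrak M^* )$ (realized as a finite substructure of $\mathfrak M^*$). If $\mathcal A$ has finite small Ramsey degree in $\mathrm{age}(\mathfrak M^* )$, then $\mathcal A$ has finite internal big Ramsey degree in $\mathfrak M^*$ and $T_{\mathrm{int}}(\mathcal A,\mathfrak M^* )\le d(\mathcal A,\mathrm{age}(\mathfrak M^* ))$.
   Context: $\mathscr D$-trending: (1) $|M_s|\le|M_t|$ for $s<t$; (2) $|M_t|\to\infty$; (3) $\{t:\mathcal M_i\hookrightarrow\mathcal M_t\}\in\mathscr D$ for each $i$. Small Ramsey degree $d(\mathcal A,\mathcal K)$: least $\ell$ such that for all $k$ and $\mathcal B\in\mathcal K$ there is $\mathcal C\in\mathcal K$ such that every $k$-coloring of $\binom{\mathcal C}{\mathcal A}$ (the copies of $\mathcal A$ in $\mathcal C$) takes at most $\ell$ values on $\binom{\mathcal B'}{\mathcal A}$ for some copy $\mathcal B'$ of $\mathcal B$ in $\mathcal C$. Internal coloring: a $k$-coloring $c^*$ of copies of $\mathcal A$ in $\mathfrak M^*$ for which there exist $Z\in\mathscr D$ and $k$-colorings $c_t$ of copies of $\mathcal A$ in $\mathcal M_t$ ($t\in Z$) with $c^*(\mathcal A')=j$ iff $\{t\in Z:\mathcal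 A'[t]\cong\mathcal A',\ c_t(\mathcal A'[t])=j\}\in\mathscr D$, where $\mathcal A'[t]$ is the substructure of $\mathcal M_t$ on the $t$-th coordinates of representatives of elements of $\mathcal A'$. $T_{\mathrm{int}}(\mathcal A,\mathfrak M^* )$ is the least $\ell$ such that for every $k$ and every internal $k$-coloring $c$ of copies of $\mathcal A$ in $\mathfrak M^*$ there is a copy $\mathfrak M'$ of $\mathfrak M^*$ inside $\mathfrak M^*$ on whose copies of $\mathcal A$ $c$ takes at most $\ell$ values; $\mathcal A$ has finite internal big Ramsey degree if such $\ell$ exists. *)

From mathcomp Require Import all_boot.
From Stdlib Require Import ClassicalEpsilon.

Unset Printing Implicit Defensive.

Definition CH : Prop :=
  forall A : (nat -> Prop) -> Prop,
    (exists f : (nat -> Prop) -> nat,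
        forall X Y, A X -> A Y -> f X = f Y -> X = Y) \/
    (exists g : (nat -> Prop) -> (nat -> Prop),
        (forall X, A (g X)) /\ injective g /\
        (forall Y, A Y -> exists X, g X = Y)).

Definition nonprincipal_ultrafilter (D : (nat -> Prop) -> Prop) : Prop :=
  [/\ D (fun _ => True),
      ~ D (fun _ => False),
      (forall X Y : nat -> Prop, (forall t, X t -> Y t) -> D X -> D Y) /\
      (forall X Y : nat -> Prop, D X -> D Y -> D (fun t => X t /\ Y t)),
      (forall X : nat -> Prop, D X \/ D (fun t => ~ X t))
    & (forall n : nat, ~ D (fun t => t = n))].

Record signature := Signature { sym : finType; ar : sym -> nat }.

Record Lstruct (L : signature) := LStruct {
  car : Type;
  rel : forall s : sym L, ('I_(ar L s) -> car) -> Prop }.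

Arguments rel {L} l s _.
Arguments car {L} l.

Record FStruct (L : signature) := FStructMk {
  fcar : finType;
  frel : forall s : sym L, ('I_(ar L s) -> fcar) -> Prop }.

Arguments frel {L} f s _.
Arguments fcar {L} f.

Definition toL (L : signature) (B : FStruct L) : Lstruct L :=
  @LStruct L (fcar B) (frel B).
Coercion toL : FStruct >-> Lstruct.

Section Structs.
Variable L : signature.

Definition embeds (N1 N2 : Lstruct L) : Prop :=
  exists f : car N1 -> car N2, injective f /\
    forall (s : sym L) (a : 'I_(ar L s) -> car N1),
      rel N1 s a <-> rel N2 s (fun i => f (a i)).

Definition sub_iso (N1 N2 : Lstruct L) (X : car N1 -> Prop) (Y : car N2 -> Prop)
  : Prop :=
  exists f : {x : car N1 | X x} -> car N2,
    [/\ forall x, Y (f x),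
        injective f,
        (forall y, Y y -> exists x, f x = y)
      & forall (s : sym L) (a : 'I_(ar L s) -> {x : car N1 | X x}),
          rel N1 s (fun i => proj1_sig (a i)) <-> rel N2 s (fun i => f (a i))].

Definition is_copy (N P : Lstruct L) (XP : car P -> Prop) (Y : car N -> Prop) :=
  sub_iso P N XP Y.

Definition subset_of (T : Type) (X Y : T -> Prop) := forall x, X x -> Y x.

Arguments subset_of {T} X Y.

Definition finite_set (T : Type) (X : T -> Prop) : Prop :=
  exists l : list T, forall x, X x <-> List.In x l.

Arguments finite_set {T} X.

Definition in_age (N : Lstruct L) (B : FStruct L) : Prop := embeds B N.

(* Here A is the substructure of N on XA. *)
Definition small_RD_prop (N : Lstruct L) (XA : car N -> Prop) (l : nat) : Prop :=
  forall (k : nat) (B : FStruct L), in_age N B ->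
    exists C : FStruct L, in_age N C /\
      forall c : (fcar C -> Prop) -> 'I_k,
        exists B' : fcar C -> Prop, is_copy C B (fun _ => True) B' /\
          exists S : {set 'I_k}, #|S| <= l /\
            forall Y : fcar C -> Prop, is_copy C N XA Y -> subset_of Y B' ->
              c Y \in S.

Definition least (P : nat -> Prop) (n : nat) : Prop :=
  P n /\ forall m, P m -> n <= m.

Definition finite_small_RD (N : Lstruct L) (XA : car N -> Prop) : Prop :=
  exists l, small_RD_prop N XA l.

Variable D : (nat -> Prop) -> Prop.
Variable M : nat -> FStruct L.

Definition trending : Prop :=
  [/\ (forall s t, s < t -> #|fcar (M s)| <= #|fcar (M t)|),
      (forall n, exists t0, forall t, t0 <= t -> n <= #|fcar (M t)|)
    & (forall i, D (fun t => embeds (M i) (M t)))].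

Definition seqprod := forall t, fcar (M t).

Definition Deq (x y : seqprod) : Prop := D (fun t => x t = y t).

Definition upcar : Type :=
  { C : seqprod -> Prop | exists x, C = (fun y => Deq x y) }.

Definition uprep (c : upcar) : seqprod :=
  proj1_sig (constructive_indefinite_description _ (proj2_sig c)).

Definition uprel (s : sym L) (a : 'I_(ar L s) -> upcar) : Prop :=
  D (fun t => frel (M t) s (fun i => uprep (a i) t)).

Definition ultraproduct : Lstruct L := @LStruct L upcar uprel.

Definition coord_set (Y : upcar -> Prop) (t : nat) : fcar (M t) -> Prop :=
  fun y => exists a, Y a /\ uprep a t = y.

Variable XA : upcar -> Prop.

Definition internal_coloring (k : nat) (c : (upcar -> Prop) -> 'I_k) : Prop :=
  exists Z : nat -> Prop, D Z /\
    exists ct : forall t, (fcar (M t) -> Prop) -> 'I_k,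
      forall Y : upcar -> Prop, is_copy ultraproduct ultraproduct XA Y ->
        forall j : 'I_k,
          c Y = j <->
          D (fun t => [/\ Z t,
                          sub_iso (M t) ultraproduct (coord_set Y t) Y
                        & ct t (coord_set Y t) = j]).

Definition int_BRD_prop (l : nat) : Prop :=
  forall (k : nat) (c : (upcar -> Prop) -> 'I_k), internal_coloring k c ->
    exists f : upcar -> upcar,
      (injective f /\ forall (s : sym L) (a : 'I_(ar L s) -> upcar),
                        uprel s a <-> uprel s (fun i => f (a i))) /\
      exists S : {set 'I_k}, #|S| <= l /\
        forall Y : upcar -> Prop, is_copy ultraproduct ultraproduct XA Y ->
          subset_of Y (fun y => exists x, f x = y) -> c Y \in S.

Definition finite_int_BRD : Prop := exists l, int_BRD_prop l.

End Structs.

From Pilot Require Import Defs.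
From mathcomp Require Import all_boot.
From mathcomp Require Import boolp.
From mathcomp Require wochoice classical_sets.
From Stdlib Require Import ClassicalEpsilon FunctionalExtensionality PropExtensionality.
From Stdlib Require Import ProofIrrelevance Classical.

(* Given an internal k-colouring c,
   induced by colourings ct t of the copies of A in M_t, we find at D-almost
   every coordinate t a "window" W_t in M_t: a copy of a large M_(upper i) on
   whose copies of A ct t takes at most l colours, and the colour sets can be
   taken equal to one set S along D.  The ultraproduct then embeds into the
   internal set prod_t W_t / D: under CH it carries a well-order whose
   initial segments are countable, and a Zorn argument builds the embedding
   point by point, each step being an instance of countable saturation of
   the ultraproduct.  A copy of A in the image is finite, so its coordinates
   lie in W_t for D-almost all t, where its colour is in S. *)

Set Implicit Arguments.
Unset Strict Implicit.
Unset Printing Implicit Defensive.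

(* [frel] from eqtype would otherwise shadow the relations of a structure. *)
Local Notation frel := Defs.frel.

Section UltrafilterFacts.
Variable D : (nat -> Prop) -> Prop.
Hypothesis HD : nonprincipal_ultrafilter D.

Lemma filterS (X Y : nat -> Prop) : D X -> (forall t, X t -> Y t) -> D Y.
Proof. by case: HD => _ _ [mono _] _ _ DX XY; apply: mono DX. Qed.

Lemma filterI (X Y : nat -> Prop) : D X -> D Y -> D (fun t => X t /\ Y t).
Proof. by case: HD => _ _ [_ meet] _ _; apply: meet. Qed.

Lemma filter_witness (X : nat -> Prop) : D X -> exists t, X t.
Proof.
move=> DX; have [_ D0 _ _ _] := HD; apply: NNPP => noX; apply: D0.
apply: (filterS DX) => t Xt; apply: noX; by exists t.
Qed.

Lemma filterT (X : nat -> Prop) : (forall t, X t) -> D X.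
Proof. by move=> allX; have [DT _ _ _ _] := HD; apply: (filterS DT) => t _; apply: allX. Qed.

Lemma ultra_compl (X : nat -> Prop) : ~ D X -> D (fun t => ~ X t).
Proof. by case: HD => _ _ _ dec _; case: (dec X). Qed.

(* Nonprincipality: every final segment of omega is D-large. *)
Lemma filter_tail (n : nat) : D (fun t => n <= t).
Proof.
elim: n => [|n IH]; first exact: filterT.
case: (classic (D (fun t => n < t))) => // not_gt; have [_ _ _ _ np] := HD.
exfalso; apply: (np n); apply: (filterS (filterI IH (ultra_compl not_gt))) => t [].
by rewrite leq_eqVlt => /orP [/eqP ->|].
Qed.

Lemma filter_bigI (I : finType) (P : I -> nat -> Prop) :
  (forall i, D (P i)) -> D (fun t => forall i, P i t).
Proof.
move=> DP.
suff /(_ (enum I)) Denum : forall r : seq I, D (fun t => forall i, i \in r -> P i t).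
  by apply: (filterS Denum) => t Pt i; apply: Pt; rewrite mem_enum.
elim=> [|a r IH]; first exact: filterT.
apply: (filterS (filterI (DP a) IH)) => t [Pa Pr] i.
by rewrite inE => /orP [/eqP ->|/Pr].
Qed.

Lemma ultra_pigeonhole (I : finType) (X : nat -> Prop) (f : nat -> I) :
  D X -> exists i, D (fun t => X t /\ f t = i).
Proof.
move=> DX; apply: NNPP => no_i.
have small i : D (fun t => ~ (X t /\ f t = i)).
  by apply: ultra_compl => Di; apply: no_i; exists i.
have [t [Xt notf]] := filter_witness (filterI DX (filter_bigI small)).
exact: (notf (f t)).
Qed.

End UltrafilterFacts.

Lemma sig_eq (T : Type) (P : T -> Prop) (x y : {z | P z}) :
  proj1_sig x = proj1_sig y -> x = y.
Proof. by apply: eq_sig_hprop => z p q; apply: proof_irrelevance. Qed.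

Section Ultraproduct.
Variable L : signature.
Variable D : (nat -> Prop) -> Prop.
Variable M : nat -> FStruct L.
Hypothesis HD : nonprincipal_ultrafilter D.

Local Notation U := (upcar L D M).
Local Notation SP := (seqprod L M).
Local Notation rep := (uprep L D M).
Local Notation Deq := (Deq L D M).

Definition upclass (x : SP) : U :=
  exist _ (fun y => Deq x y) (ex_intro _ x erefl).

Lemma Deq_refl (x : SP) : Deq x x.
Proof. exact: filterT. Qed.

Lemma Deq_sym (x y : SP) : Deq x y -> Deq y x.
Proof. by move=> Exy; apply: (filterS HD Exy) => t ->. Qed.

Lemma Deq_trans (x y z : SP) : Deq x y -> Deq y z -> Deq x z.
Proof. by move=> Exy Eyz; apply: (filterS HD (filterI HD Exy Eyz)) => t [-> ->]. Qed.

Lemma upclass_eq (x y : SP) : upclass x = upclass y <-> Deq x y.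
Proof.
split=> [E|Exy].
- have := f_equal (fun c => proj1_sig c y) E => /= ->; exact: Deq_refl.
- apply: sig_eq; apply: functional_extensionality => z.
  apply: propositional_extensionality.
  by split=> [Exz|Eyz]; [apply: Deq_trans (Deq_sym Exy) Exz | apply: Deq_trans Exy Eyz].
Qed.

Lemma uprep_spec (c : U) : proj1_sig c = (fun y => Deq (rep c) y).
Proof. by rewrite /uprep; case: constructive_indefinite_description => x /= ->. Qed.

Lemma upclass_uprep (c : U) : upclass (rep c) = c.
Proof. by apply: sig_eq; rewrite /= uprep_spec. Qed.

Lemma uprep_upclass (x : SP) : Deq x (rep (upclass x)).
Proof.
have := f_equal (fun f => f x) (uprep_spec (upclass x)) => /= E.
by apply: Deq_sym; rewrite -E; apply: Deq_refl.
Qed.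

Lemma uprel_upclass (s : sym L) (y : 'I_(ar L s) -> SP) :
  uprel L D M s (fun k => upclass (y k)) <-> D (fun t => frel (M t) s (fun k => y k t)).
Proof.
have reps : D (fun t => forall k, rep (upclass (y k)) t = y k t).
  by apply: filter_bigI => // k; apply: Deq_sym; apply: uprep_upclass.
split=> Dy; apply: (filterS HD (filterI HD reps Dy)) => t [E];
  by rewrite (functional_extensionality _ _ E).
Qed.

Lemma los (I : finType) (u : I -> U) :
  D (fun t => (forall i j, u i = u j <-> rep (u i) t = rep (u j) t) /\
     forall s (b : 'I_(ar L s) -> I),
       uprel L D M s (fun k => u (b k)) <-> frel (M t) s (fun k => rep (u (b k)) t)).
Proof.
apply: filterI => //.
- have eq_pair (p : I * I) : D (fun t => u p.1 = u p.2 <-> rep (u p.1) t = rep (u p.2) t).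
    case: (classic (u p.1 = u p.2)) => E.
    + by rewrite E; apply: filterT => // t.
    + have : ~ Deq (rep (u p.1)) (rep (u p.2)).
        by rewrite -upclass_eq !upclass_uprep.
      by move=> /(ultra_compl HD) Dneq; apply: (filterS HD Dneq) => t neq; split=> // /neq.
  by apply: (filterS HD (filter_bigI HD eq_pair)) => t H i j; apply: (H (i, j)).
- pose J := {s : sym L & {ffun 'I_(ar L s) -> I}}.
  have rel_tuple (p : J) : D (fun t => uprel L D M (tag p) (fun k => u (tagged p k)) <->
              frel (M t) (tag p) (fun k => rep (u (tagged p k)) t)).
    case: (classic (uprel L D M (tag p) (fun k => u (tagged p k)))) => R.
    + by apply: (filterS HD R) => t; tauto.
    + by apply: (filterS HD (ultra_compl HD R)) => t; tauto.
  apply: (filterS HD (filter_bigI HD rel_tuple)) => t H s b.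
  have := H (Tagged (fun s => {ffun 'I_(ar L s) -> I}) (finfun b)) => /=.
  have Eb : finfun b =1 b by move=> k; rewrite ffunE.
  by rewrite !(functional_extensionality _ _ (fun k => congr1 _ (Eb k)))
             (functional_extensionality _ _ (fun k => congr1 (fun i => rep (u i) t) (Eb k))).
Qed.

Lemma los_realize (I : finType) (E0 : I -> I -> Prop)
  (R0 : forall s, ('I_(ar L s) -> I) -> Prop) (ka : I -> SP) (T : nat -> Prop) :
  D T ->
  (forall t, T t -> (forall i j, ka i t = ka j t <-> E0 i j) /\
     forall s b, R0 s b <-> frel (M t) s (fun k => ka (b k) t)) ->
  (forall i j, upclass (ka i) = upclass (ka j) <-> E0 i j) /\
  (forall s b, R0 s b <-> uprel L D M s (fun k => upclass (ka (b k)))).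
Proof.
move=> DT HT; split=> [i j|s b].
- rewrite upclass_eq; split=> [Eij|E0ij].
  + have [t [Et Tt]] := filter_witness HD (filterI HD Eij DT).
    by apply/(proj1 (HT t Tt) i j).
  + by apply: (filterS HD DT) => t Tt; apply/(proj1 (HT t Tt) i j).
- rewrite (uprel_upclass (fun k => ka (b k))); split=> [R0b|Rb].
  + by apply: (filterS HD DT) => t Tt; apply/(proj2 (HT t Tt) s b).
  + have [t [Rt Tt]] := filter_witness HD (filterI HD Rb DT).
    by apply/(proj2 (HT t Tt) s b).
Qed.

(* The ultraproduct has at most continuum many elements: a class is coded
   by the graph of its representative. *)
Lemma upcar_code_inj :
  injective (fun (u : U) (n : nat) => exists t, n = pickle (t, nat_of_ord (enum_rank (rep u t)))).
Proof.
move=> u1 u2 E.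
have same_rep t : rep u1 t = rep u2 t.
  have [t' /(pcan_inj pickleK) [<- /ord_inj /enum_rank_inj //]] :
      exists t', pickle (t, nat_of_ord (enum_rank (rep u1 t))) =
                 pickle (t', nat_of_ord (enum_rank (rep u2 t'))).
    by rewrite -(f_equal (fun f => f (pickle (t, nat_of_ord (enum_rank (rep u1 t))))) E); exists t.
by rewrite -(upclass_uprep u1) -(upclass_uprep u2) (functional_extensionality_dep _ _ same_rep).
Qed.

Local Notation N := (ultraproduct L D M).

Lemma age_ultraproduct (dflt : SP) (F : FStruct L) :
  embeds L F N <-> D (fun t => embeds L F (M t)).
Proof.
split=> [[f [f_inj f_rel]]|DF].
- apply: (filterS HD (los f)) => t [feq frel_t].
  exists (fun i => rep (f i) t); split=> [i j /feq /f_inj //|s a].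
  by rewrite (f_rel s a); apply: frel_t.
- pose ka (i : fcar F) : SP := fun t =>
    match excluded_middle_informative (embeds L F (M t)) with
    | left h => proj1_sig (constructive_indefinite_description _ h) i
    | right _ => dflt t end.
  have ka_emb t : embeds L F (M t) ->
      (forall i j, ka i t = ka j t <-> i = j) /\
      (forall s b, frel F s b <-> frel (M t) s (fun k => ka (b k) t)).
    rewrite /ka; case: excluded_middle_informative => // h _.
    case: constructive_indefinite_description => f [f_inj f_rel] /=.
    by split=> [i j|s b]; [split=> [/f_inj|->] | apply: f_rel].
  have [realize_eq realize_rel] := los_realize DF ka_emb.
  exists (fun i => upclass (ka i)); split=> [i j /realize_eq //|s a].
  exact: realize_rel.
Qed.

End Ultraproduct.

Section InducedSubstructures.
Variable L : signature.

Definition is_emb (N1 N2 : Lstruct L) (g : car N1 -> car N2) :=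
  injective g /\
  forall s (a : 'I_(ar L s) -> car N1), Defs.rel N1 s a <-> Defs.rel N2 s (fun k => g (a k)).

Lemma sub_iso_inv (N1 N2 : Lstruct L) X Y :
  sub_iso L N1 N2 X Y -> sub_iso L N2 N1 Y X.
Proof.
move=> [f [fY f_inj f_onto f_rel]].
pose pre (y : {y | Y y}) := constructive_indefinite_description _ (f_onto _ (proj2_sig y)).
have preK y : f (proj1_sig (pre y)) = proj1_sig y by case: (pre y).
exists (fun y => proj1_sig (proj1_sig (pre y))); split.
- by move=> y; apply: proj2_sig.
- move=> y1 y2 E; apply: sig_eq; rewrite -preK -[proj1_sig y2]preK.
  by congr f; apply: sig_eq.
- move=> x Xx; exists (exist _ (f (exist _ x Xx)) (fY _)).
  by have /f_inj -> := preK (exist _ (f (exist _ x Xx)) (fY _)).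
- move=> s a; have Ea : (fun k => proj1_sig (a k)) = (fun k => f (proj1_sig (pre (a k)))).
    by apply: functional_extensionality => k; rewrite preK.
  by rewrite Ea -f_rel.
Qed.

Lemma sub_iso_comp (N1 N2 N3 : Lstruct L) X Y Z :
  sub_iso L N1 N2 X Y -> sub_iso L N2 N3 Y Z -> sub_iso L N1 N3 X Z.
Proof.
move=> [f [fY f_inj f_onto f_rel]] [g [gZ g_inj g_onto g_rel]].
exists (fun x => g (exist _ (f x) (fY x))); split.
- by move=> x; apply: gZ.
- by move=> x1 x2 /g_inj /(f_equal (@proj1_sig _ _)) /f_inj.
- move=> z /g_onto [[y Yy] <-]; have [x Ex] := f_onto y Yy.
  by exists x; congr g; apply: sig_eq.
- by move=> s a; rewrite f_rel; apply: (g_rel s (fun k => exist _ (f (a k)) (fY (a k)))).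
Qed.

Lemma sub_iso_image (N1 N2 N3 : Lstruct L) X Y (g : car N2 -> car N3) :
  is_emb g -> sub_iso L N1 N2 X Y -> sub_iso L N1 N3 X (fun z => exists y, Y y /\ g y = z).
Proof.
move=> [g_inj g_rel] [f [fY f_inj f_onto f_rel]].
exists (fun x => g (f x)); split.
- by move=> x; exists (f x).
- by move=> x1 x2 /g_inj /f_inj.
- by move=> z [y [/f_onto [x <-] <-]]; exists x.
- by move=> s a; rewrite f_rel; apply: g_rel.
Qed.

Lemma sub_iso_preimage (N1 N2 N3 : Lstruct L) X Y (g : car N2 -> car N3) :
  is_emb g -> sub_iso L N1 N3 X Y -> (forall z, Y z -> exists y, g y = z) ->
  sub_iso L N1 N2 X (fun y => Y (g y)).
Proof.
move=> [g_inj g_rel] [f [fY f_inj f_onto f_rel]] Y_img.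
pose pre x := constructive_indefinite_description _ (Y_img _ (fY x)).
have preK x : g (proj1_sig (pre x)) = f x by case: (pre x).
exists (fun x => proj1_sig (pre x)); split.
- by move=> x; rewrite preK.
- by move=> x1 x2 E; apply: f_inj; rewrite -!preK E.
- move=> y /f_onto [x Ex]; exists x; apply: g_inj; by rewrite preK.
- move=> s a; rewrite f_rel g_rel.
  have -> // : (fun k => f (a k)) = (fun k => g (proj1_sig (pre (a k)))).
  by apply: functional_extensionality => k; rewrite preK.
Qed.

Lemma sub_iso_finite (N1 N2 : Lstruct L) X Y :
  finite_set _ X -> sub_iso L N1 N2 X Y -> finite_set _ Y.
Proof.
move=> [lX lX_spec] [f [fY _ f_onto _]].
pose img a := if excluded_middle_informative (X a) is left p then [:: f (exist _ a p)] else [::].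
exists (List.flat_map img lX) => y; rewrite List.in_flat_map; split.
- move=> /f_onto [[a Xa] <-]; exists a; split; first exact/lX_spec.
  by rewrite /img; case: excluded_middle_informative => // p; left; congr f; apply: sig_eq.
- move=> [a [_]]; rewrite /img; case: excluded_middle_informative => // p [<-|] //.
Qed.

Lemma emb_into_copy (F Bs T : Lstruct L) (g : car F -> car Bs) (B' : car T -> Prop) :
  is_emb g -> is_copy L T Bs (fun _ => True) B' ->
  exists g' : car F -> car T, is_emb g' /\ forall u, B' (g' u).
Proof.
move=> [g_inj g_rel] [f [fB f_inj _ f_rel]].
exists (fun u => f (exist _ (g u) I)); split=> // ; split.
- by move=> u1 u2 /f_inj /(f_equal (@proj1_sig _ _)) /g_inj.
- by move=> s a; rewrite g_rel (f_rel s (fun k => exist (fun _ => True) (g (a k)) I)).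
Qed.

End InducedSubstructures.

Section RamseyArrows.
Variable L : signature.
Variable N : Lstruct L.
Variable XA : car N -> Prop.

Definition ramsey_arrow (k l : nat) (C Bs : Lstruct L) :=
  forall c : (car C -> Prop) -> 'I_k,
    exists B' : car C -> Prop, is_copy L C Bs (fun _ => True) B' /\
      exists S : {set 'I_k}, #|S| <= l /\
        forall Y : car C -> Prop, is_copy L C N XA Y -> subset_of _ Y B' -> c Y \in S.

Lemma ramsey_arrow_emb k l (C T Bs : Lstruct L) (gam : car C -> car T) :
  is_emb gam -> ramsey_arrow k l C Bs -> ramsey_arrow k l T Bs.
Proof.
move=> gam_emb arrowC c.
pose img (X : car C -> Prop) := fun y => exists u, X u /\ gam u = y.
have [B' [B'_copy [S [S_card S_col]]]] := arrowC (fun X => c (img X)).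
exists (img B'); split; first exact: sub_iso_image gam_emb B'_copy.
exists S; split=> // Y Y_copy Y_sub.
have Y_img z : Y z -> exists u, gam u = z by move=> /Y_sub [u [_ <-]]; exists u.
have -> : Y = img (fun u => Y (gam u)).
  apply: functional_extensionality => z; apply: propositional_extensionality.
  by split=> [Yz|[u [Yu <-]]] //; have [u Eu] := Y_img z Yz; exists u; rewrite Eu.
apply: S_col; first exact: sub_iso_preimage gam_emb Y_copy Y_img.
move=> u Yu; have [u' [B'u' Eu']] := Y_sub _ Yu.
by rewrite -(proj1 gam_emb _ _ Eu').
Qed.

End RamseyArrows.

Definition countable_set (T : Type) (X : T -> Prop) :=
  exists e : T -> nat, forall a b, X a -> X b -> e a = e b -> a = b.

Definition omega1_order (T : Type) (le : T -> T -> Prop) :=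
  [/\ (forall x y, le x y \/ le y x),
      (forall x y, le x y -> le y x -> x = y),
      (forall P : T -> Prop, (exists x, P x) -> exists m, P m /\ forall y, P y -> le m y)
    & (forall x, countable_set (fun y => le y x /\ y <> x))].

Lemma well_order_exists (T : Type) : exists le : T -> T -> Prop,
  [/\ (forall x y, le x y \/ le y x),
      (forall x y, le x y -> le y x -> x = y)
    & (forall P : T -> Prop, (exists x, P x) -> exists m, P m /\ forall y, P y -> le m y)].
Proof.
have [R R_wo] := wochoice.well_ordering_principle (classicType T).
have mem_asbool (P : T -> Prop) z : (z \in (fun z : classicType T => `[< P z >])) = `[< P z >].
  by rewrite unfold_in.
have R_min P : (exists x, P x) -> exists m, P m /\ forall y, P y -> R m y.
  move=> [x Px]; have : wochoice.nonempty (fun z : classicType T => `[< P z >]).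
    by exists x; rewrite mem_asbool; apply/asboolP.
  move=> /R_wo [z [[Pz z_min] _]]; move: Pz; rewrite mem_asbool => /asboolP Pz.
  by exists z; split=> // y Py; apply: z_min; rewrite mem_asbool; apply/asboolP.
have R_refl x : R x x by have [|z [-> z_min]] := R_min (eq^~ x); [exists x | apply: z_min].
exists (fun x y => R x y); split=> // [x y|x y Rxy Ryx].
- by have [|z [[->|->] z_min]] := R_min (fun z => z = x \/ z = y);
    [exists x; left | left; apply: z_min; right | right; apply: z_min; left].
- (* both x and y are minima of {x, y}, which has a unique minimum *)
  have : wochoice.nonempty (fun z : classicType T => `[< z = x \/ z = y >]).
    by exists x; rewrite mem_asbool; apply/asboolP; left.
  move=> /R_wo [z [_ z_unique]].
  have min_of v : (v = x \/ v = y) -> R v x -> R v y ->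
      wochoice.minimum_of R (fun z : classicType T => `[< z = x \/ z = y >]) v.
    move=> vxy Rvx Rvy; split; first by rewrite mem_asbool; apply/asboolP.
    by move=> w; rewrite mem_asbool => /asboolP [->|->].
  by rewrite -(z_unique x (min_of x (or_introl erefl) (R_refl x) Rxy))
             (z_unique y (min_of y (or_intror erefl) Ryx (R_refl y))).
Qed.

(* Under CH, every set of size at most continuum carries an omega_1-order:
   take any well-order; if some initial segment is uncountable, the least
   such segment has size continuum, and transporting the order of that
   segment along a bijection yields an order with countable segments. *)
Lemma CH_omega1_order (T : Type) (io : T -> (nat -> Prop)) :
  injective io -> CH -> exists le : T -> T -> Prop, omega1_order le.
Proof.
move=> io_inj ch.
have [le0 [tot0 anti0 min0]] := well_order_exists T.
case: (classic (forall x, countable_set (fun y => le0 y x /\ y <> x))) => all_ctbl.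
  by exists le0; split.
have [x0 [x0_unc x0_min]] := min0 (fun x => ~ countable_set (fun y => le0 y x /\ y <> x))
   (not_all_ex_not _ _ all_ctbl).
pose seg0 := fun Z => exists y, (le0 y x0 /\ y <> x0) /\ io y = Z.
case: (ch seg0) => [[f f_inj]|[g [g_seg [g_inj _]]]].
  apply: False_ind; apply: x0_unc; exists (fun y => f (io y)) => a b Ha Hb E.
  by apply: io_inj; apply: f_inj E; [exists a | exists b].
(* phi : T -> T injects T into the uncountable initial segment below x0 *)
pose pick u := constructive_indefinite_description _ (g_seg (io u)).
pose phi u := proj1_sig (pick u).
have phiP u : (le0 (phi u) x0 /\ phi u <> x0) /\ io (phi u) = g (io u).
  by rewrite /phi; case: (pick u).
have phi_inj : injective phi.
  move=> u v E; apply: io_inj; apply: g_inj.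
  by rewrite -(proj2 (phiP u)) -(proj2 (phiP v)) E.
exists (fun x y => le0 (phi x) (phi y)); split.
- by move=> x y; apply: tot0.
- by move=> x y H1 H2; apply: phi_inj; apply: anti0.
- move=> P [x Px].
  have [_ [[m [Pm <-]] m_min]] := min0 (fun z => exists m, P m /\ phi m = z)
    (ex_intro _ (phi x) (ex_intro _ x (conj Px erefl))).
  by exists m; split=> // y Py; apply: m_min; exists y.
- move=> x.
  have [e e_inj] : countable_set (fun y => le0 y (phi x) /\ y <> phi x).
    apply: NNPP => unc; have [[_ neq] _] := phiP x; apply: neq.
    by apply: anti0 (proj1 (proj1 (phiP x))) (x0_min _ unc).
  exists (fun y => e (phi y)) => a b [Ha1 Ha2] [Hb1 Hb2] E.
  by apply: (phi_inj); apply: e_inj E; split=> // /phi_inj.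
Qed.

Definition max_below (P : nat -> Prop) (t : nat) : nat :=
  \max_(i in [pred i : 'I_t.+1 | `[< P i >]]) (i : nat).

Lemma max_below_spec (P : nat -> Prop) (t j : nat) :
  P j -> j <= t -> j <= max_below P t /\ P (max_below P t).
Proof.
move=> Pj le_jt.
have j_in : Ordinal (le_jt : j < t.+1) \in [pred i : 'I_t.+1 | `[< P i >]].
  by rewrite inE /=; apply/asboolP.
split; first exact: (@leq_bigmax_cond _ _ (fun i : 'I_t.+1 => (i : nat)) _ j_in).
have [i0 i0_in ->] : {i0 | i0 \in [pred i : 'I_t.+1 | `[< P i >]] & max_below P t = i0}.
  by apply: eq_bigmax_cond; apply/card_gt0P; exists (Ordinal (le_jt : j < t.+1)).
by move: i0_in; rewrite inE /= => /asboolP.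
Qed.

Lemma chain_finite_bound (S T : Type) (F : classical_sets.set (classical_sets.set (S * T)))
    (X0 : classical_sets.set (S * T)) :
  F X0 -> classical_sets.total_on F classical_sets.subset ->
  (forall X, F X -> forall a y1 y2, X (a, y1) -> X (a, y2) -> y1 = y2) ->
  forall (I : eqType) (w : I -> S) (r : seq I), exists X, F X /\
    forall i, i \in r -> forall y, classical_sets.bigcup F id (w i, y) -> X (w i, y).
Proof.
move=> FX0 Ftot F_fun I w.
pose UF := classical_sets.bigcup F id.
have union_edge W a y0 y : F W -> W (a, y0) -> UF (a, y) -> W (a, y).
  move=> FW Wy0 [Z FZ Zy]; case: (Ftot _ _ FZ FW) => [ZW|WZ]; first exact: ZW.
  by rewrite (F_fun _ FZ _ _ _ Zy (WZ _ Wy0)).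
elim=> [|i r [X [FX Xr]]]; first by exists X0.
have [X' [FX' [X'i XX']]] : exists X', F X' /\
    (forall y, UF (w i, y) -> X' (w i, y)) /\ (forall p, X p -> X' p).
  case: (classic (exists y0, UF (w i, y0))) => [[y0 [Y FY Yy0]]|no_edge].
  - case: (Ftot _ _ FX FY) => [XY|YX].
    + by exists Y; split=> //; split=> // y; apply: union_edge FY Yy0.
    + by exists X; split=> //; split=> // y; apply: union_edge FX (YX _ Yy0).
  - by exists X; split=> //; split=> // y Uy; case: no_edge; exists y.
exists X'; split=> // j; rewrite inE => /orP [/eqP ->|jr] y Uy; first exact: X'i.
exact: XX' (Xr j jr y Uy).
Qed.

Section Saturation.
Variable L : signature.
Variable D : (nat -> Prop) -> Prop.
Variable M : nat -> FStruct L.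
Hypothesis HD : nonprincipal_ultrafilter D.
(* An internal subset prod_t B_t / D of the ultraproduct. *)
Variable B : forall t, fcar (M t) -> Prop.
Arguments B : clear implicits.

Local Notation U := (upcar L D M).
Local Notation SP := (seqprod L M).
Local Notation rep := (uprep L D M).
Local Notation uprel := (uprel L D M).

Definition internal_mem (u : U) := D (fun t => B t (rep u t)).

Definition extendable (G : U -> U -> Prop) :=
  forall (I : finType) (w : I -> U), exists h : I -> U,
    [/\ forall i y, G (w i) y -> h i = y,
        forall i, internal_mem (h i),
        forall i j, h i = h j <-> w i = w j
      & forall s (b : 'I_(ar L s) -> I),
          uprel s (fun k => w (b k)) <-> uprel s (fun k => h (b k))].

Lemma extendable_functional G a y1 y2 : extendable G -> G a y1 -> G a y2 -> y1 = y2.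
Proof.
move=> extG G1 G2; have [h [agree _ _ _]] := extG unit (fun _ => a).
by rewrite -(agree tt y1 G1) (agree tt y2 G2).
Qed.

Lemma extendable_sub (G G' : U -> U -> Prop) :
  extendable G -> (forall a b, G' a b -> G a b) -> extendable G'.
Proof.
move=> extG sub I w; have [h [agree h_int h_eq h_rel]] := extG I w.
by exists h; split=> // i y /sub; apply: agree.
Qed.

(* The one-point extension step, i.e. countable saturation of the
   ultraproduct: a finitely extendable G with countable domain (e is
   injective on it) extends to any new point x. *)
Section OnePointExtension.
Variable G : U -> U -> Prop.
Hypothesis extG : extendable G.
Variable e : U -> nat.
Hypothesis e_inj : forall a b, (exists y, G a y) -> (exists y, G b y) -> e a = e b -> a = b.
Variable x : U.

(* v is, at coordinate t, an image of the tuple w agreeing with G on the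
   first n points of dom G, and together with z realises the type of
   (x, w); the option index None stands for x and z. *)
Definition matches n t (z : fcar (M t)) m (w : 'I_m -> U) (v : 'I_m -> fcar (M t)) :=
  [/\ forall i, B t (v i),
      forall i y, G (w i) y -> e (w i) < n -> v i = rep y t,
      forall j j', oapp w x j = oapp w x j' <-> oapp v z j = oapp v z j'
    & forall s (b : 'I_(ar L s) -> option 'I_m),
        uprel s (fun k => oapp w x (b k)) <-> frel (M t) s (fun k => oapp v z (b k))].
Arguments matches n t z {m} w v.

Definition candidate n t (z : fcar (M t)) :=
  B t z /\ forall m, m <= n -> forall w : 'I_m -> U, exists v, matches n t z w v.
Arguments candidate : clear implicits.

Lemma candidate_mono n n' t z : n <= n' -> candidate n' t z -> candidate n t z.
Proof.
move=> le_nn' [Bz cand]; split=> // m le_mn w.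
have [v [vB vG v_eq v_rel]] := cand m (leq_trans le_mn le_nn') w.
by exists v; split=> // i y Gy lt; apply: vG => //; apply: leq_trans lt le_nn'.
Qed.

(* The n-type of a tuple w: which of the first n points of dom G its
   entries are, and the equalities and relations of (x, w).  There are
   finitely many n-types of tuples of a given length. *)
Definition sym_tuple m := {s : sym L & {ffun 'I_(ar L s) -> option 'I_m}}.
Definition ntype n m :=
  ({ffun 'I_m -> 'I_n.+1} * {ffun (option 'I_m * option 'I_m) -> bool} *
   {ffun sym_tuple m -> bool})%type.

Definition type_of n m (w : 'I_m -> U) : ntype n m :=
  ([ffun i => inord (if `[< (exists y, G (w i) y) /\ e (w i) < n >] then e (w i) else n)],
   [ffun p : option 'I_m * option 'I_m => `[< oapp w x p.1 = oapp w x p.2 >]],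
   [ffun sb : sym_tuple m => `[< uprel (tag sb) (fun k => oapp w x (tagged sb k)) >]]).

Lemma matches_type n t z m (w1 w2 : 'I_m -> U) v :
  type_of n w1 = type_of n w2 -> matches n t z w1 v -> matches n t z w2 v.
Proof.
rewrite /type_of => [[E1 E2 E3]] [vB vG v_eq v_rel]; split=> //.
- move=> i y Gy lt.
  have := f_equal (fun f : {ffun 'I_m -> 'I_n.+1} => f i) E1; rewrite !ffunE.
  have -> : `[< (exists y, G (w2 i) y) /\ e (w2 i) < n >] = true.
    by apply/asboolP; split=> //; exists y.
  case: asboolP => [[dom1 lt1]|_] /(f_equal (@nat_of_ord _));
    rewrite !inordK ?ltnS ?leqnn //; try exact: ltnW.
  + move=> Ee; have Ew : w1 i = w2 i by apply: e_inj => //; exists y.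
    by apply: vG => //; rewrite Ew.
  + by move=> En; rewrite En ltnn in lt.
- move=> j j'; rewrite -v_eq.
  have := f_equal (fun f : {ffun (option 'I_m * option 'I_m) -> bool} => f (j, j')) E2.
  by rewrite !ffunE /=; case: asboolP; case: asboolP => // H1 H2 _; split=> // /H1.
- move=> s b; rewrite -v_rel.
  have := f_equal (fun f : {ffun sym_tuple m -> bool} => f (Tagged _ (finfun b))) E3.
  have Eb k : finfun b k = b k by rewrite ffunE.
  rewrite !ffunE /= !(functional_extensionality _ _ (fun k => congr1 (oapp _ x) (Eb k))).
  by case: asboolP; case: asboolP => // H1 H2 _; split=> // /H1.
Qed.

Definition type_index n := {m : 'I_n.+1 & ntype n m}.
Definition realized n (p : type_index n) :=
  exists w : 'I_(tag p) -> U, type_of n w = tagged p.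
Definition representative n (p : type_index n) : 'I_(tag p) -> U :=
  match excluded_middle_informative (realized p) with
  | left h => proj1_sig (constructive_indefinite_description _ h)
  | right _ => fun _ => x end.
Arguments representative [n] p.

Lemma representative_type n p : realized p -> type_of n (representative p) = tagged p.
Proof.
rewrite /representative => r; case: excluded_middle_informative => // h.
by case: constructive_indefinite_description.
Qed.

Definition rep_index n := option {p : type_index n & 'I_(tag p)}.
Definition rep_family n (j : rep_index n) : U :=
  if j is Some q then representative (tag q) (tagged q) else x.

(* Extending G to the finite family of all representatives and applying
   Łoś yields, on a D-large set of coordinates, a candidate of precision n. *)
Lemma candidate_large n : D (fun t => exists z, candidate n t z).
Proof.
have [h [agree h_int h_eq h_rel]] := extG (@rep_family n).
have h_int_t : D (fun t => forall j, B t (rep (h j) t)) by apply: filter_bigI.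
apply: (filterS HD (filterI HD (los HD h) h_int_t)) => t [[los_eq los_rel] hB].
exists (rep (h None) t); split=> [|m le_mn w]; first exact: hB.
pose p : type_index n :=
  existT (fun m : 'I_n.+1 => ntype n m) (@Ordinal n.+1 m le_mn) (type_of n w).
have rp : realized p by exists w.
pose idx (j : option 'I_m) : rep_index n :=
  if j is Some i then Some (existT (fun p : type_index n => 'I_(tag p)) p i) else None.
pose v (i : 'I_m) := rep (h (idx (Some i))) t.
exists v; apply: (@matches_type _ _ _ _ (representative p)); first by rewrite representative_type.
have Ew j : oapp (representative p) x j = rep_family (idx j) by case: j.
have Ev j : oapp v (rep (h None) t) j = rep (h (idx j)) t by case: j.
split=> [i|i y Gy _|j j'|s b].
- exact: hB.
- by rewrite /v (agree (idx (Some i)) y Gy).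
- by rewrite Ew Ew Ev Ev -h_eq; apply: los_eq.
- rewrite (functional_extensionality _ _ (fun k => Ew (b k)))
          (functional_extensionality _ _ (fun k => Ev (b k))).
  by rewrite (h_rel s (fun k => idx (b k))); apply: los_rel.
Qed.

(* The image of x: at coordinate t, a candidate of the largest precision
   n <= t available there. *)
Definition has_candidate n t := exists z, candidate n t z.
Definition image_coord t : fcar (M t) :=
  match excluded_middle_informative (has_candidate (max_below (has_candidate^~ t) t) t) with
  | left h => proj1_sig (constructive_indefinite_description _ h)
  | right _ => rep x t end.

Lemma image_coord_candidate n t : has_candidate n t -> n <= t -> candidate n t (image_coord t).
Proof.
move=> cand_n le_nt.
have [le_n_max cand_max] := max_below_spec (P := has_candidate^~ t) cand_n le_nt.
apply: (candidate_mono le_n_max).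
rewrite /image_coord; case: excluded_middle_informative => [h|/(_ cand_max) []].
by case: constructive_indefinite_description.
Qed.

(* Choose n above the size of the family w and the
   e-indices of its points in dom G; at D-almost every t the image of x has
   precision n, so w has a matching image there, and Łoś assembles these
   coordinatewise images into the required extension. *)
Lemma extendable_adjoin :
  extendable (fun a b => G a b \/ (a = x /\ b = upclass D (M := M) image_coord)).
Proof.
move=> I w.
pose m := #|I|.
pose w0 (i : 'I_m) := w (enum_val i).
pose n := m + \sum_(i : I) (e (w i)).+1.
have e_lt i : e (w i) < n.
  by rewrite /n (bigD1 i) //=; apply: leq_trans (leq_addr _ _) (leq_addl _ _).
have le_mn : m <= n by apply: leq_addr.
pose T t := has_candidate n t /\ n <= t.
have DT : D T by apply: filterI (candidate_large n) (filter_tail HD n).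
pose vv t : 'I_m -> fcar (M t) :=
  match excluded_middle_informative (T t) with
  | left h => proj1_sig (constructive_indefinite_description _
       (proj2 (image_coord_candidate (proj1 h) (proj2 h)) m le_mn w0))
  | right _ => fun i => rep (w0 i) t end.
have vvP t : T t -> matches n t (image_coord t) w0 (vv t).
  by move=> Tt; rewrite /vv; case: excluded_middle_informative => // h;
     case: constructive_indefinite_description.
have w0E i : w0 (enum_rank i) = w i by rewrite /w0 enum_rankK.
pose ka (i : I) : SP := fun t => vv t (enum_rank i).
have ka_type t : T t ->
    (forall i j, ka i t = ka j t <-> w i = w j) /\
    (forall s b, uprel s (fun k => w (b k)) <-> frel (M t) s (fun k => ka (b k) t)).
  move=> Tt; have [_ _ v_eq v_rel] := vvP t Tt; split=> [i j|s b].
  - by have := v_eq (Some (enum_rank i)) (Some (enum_rank j)); rewrite /= !w0E => ->.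
  - have := v_rel s (fun k => Some (enum_rank (b k))).
    by rewrite (functional_extensionality _ _ (fun k => w0E (b k))).
have [ka_eq ka_rel] := los_realize HD DT ka_type.
exists (fun i => upclass D (ka i)); split=> [i y [Gy|[Ex Ey]]|i|//|//].
- rewrite -(upclass_uprep y); apply/(upclass_eq HD); apply: (filterS HD DT) => t Tt.
  by have [_ vG _ _] := vvP t Tt; apply: vG; rewrite w0E.
- rewrite Ey; apply/(upclass_eq HD); apply: (filterS HD DT) => t Tt.
  have [_ _ v_eq _] := vvP t Tt.
  by have := v_eq (Some (enum_rank i)) None; rewrite /= w0E Ex => /proj1; apply.
- rewrite /internal_mem.
  apply: (filterS HD (filterI HD DT (uprep_upclass HD (ka i)))) => t [Tt <-].
  by have [vB _ _ _] := vvP t Tt; apply: vB.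
Qed.

End OnePointExtension.

Local Notation graph S := (fun a b => S (a, b)).

Definition admissible (le : U -> U -> Prop) (S : classical_sets.set (U * U)) :=
  extendable (graph S) /\
  forall a b, (exists y, S (b, y)) -> le a b -> exists y, S (a, y).

(* Zorn's lemma applies: the union of a chain of admissible maps is
   admissible (the union of the empty chain is the empty map). *)
Lemma admissible_maximal (le : U -> U -> Prop) :
  extendable (fun _ _ => False) ->
  exists A, admissible le A /\
    forall A', classical_sets.proper A A' -> ~ admissible le A'.
Proof.
move=> ext0; apply: classical_sets.Zorn_bigcup => F F_adm Ftot; split.
- case: (classic (exists X, F X)) => [[X0 FX0]|noF]; last first.
    by apply: (extendable_sub ext0) => a b [X FX _]; apply: noF; exists X.
  have F_fun X : F X -> forall a y1 y2, X (a, y1) -> X (a, y2) -> y1 = y2.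
    by move=> FX a y1 y2; apply: extendable_functional (proj1 (F_adm X FX)).
  move=> I w.
  have [X [FX Xw]] := chain_finite_bound FX0 Ftot F_fun w (enum I).
  have [h [agree h_int h_eq h_rel]] := proj1 (F_adm X FX) I w.
  by exists h; split=> // i y Uy; apply: agree; apply: (Xw i _ y Uy); rewrite mem_enum.
- move=> a b [y [X FX Xy]] le_ab.
  have [y' Xy'] := proj2 (F_adm X FX) a b (ex_intro _ y Xy) le_ab.
  by exists y'; exists X.
Qed.

(* A maximal admissible map is total: otherwise let x be the le-least point
   outside its domain; the domain is the initial segment below x, which is
   countable, so the map extends to x by countable saturation. *)
Lemma maximal_admissible_total (le : U -> U -> Prop) A :
  omega1_order le -> admissible le A ->
  (forall A', classical_sets.proper A A' -> ~ admissible le A') ->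
  forall a, exists y, A (a, y).
Proof.
move=> [tot anti le_min ctbl] [A_ext A_down] A_max; apply: NNPP => not_total.
have [x [x_out x_min]] :=
  le_min (fun a => ~ exists y, A (a, y)) (not_all_ex_not _ _ not_total).
have dom_below a : (exists y, A (a, y)) -> le a x /\ a <> x.
  move=> dom_a; split; last by move=> E; apply: x_out; rewrite -E.
  by case: (tot a x) => // le_xa; case: x_out; apply: A_down dom_a le_xa.
have [e e_inj] := ctbl x.
have e_inj_dom a b : (exists y, A (a, y)) -> (exists y, A (b, y)) -> e a = e b -> a = b.
  by move=> dom_a dom_b; apply: e_inj; apply: dom_below.
pose y := upclass D (image_coord (graph A) e x).
apply: (A_max (fun p => A p \/ (p.1 = x /\ p.2 = y))).
  split=> [p Ap|E]; first by left.
  by apply: x_out; exists y; apply: E (x, y) (or_intror (conj erefl erefl)).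
split; first exact: (extendable_adjoin A_ext e_inj_dom x).
move=> a b [y' [Ay'|[/= E1 E2]]] le_ab.
- have [y'' Ay''] := A_down a b (ex_intro _ y' Ay') le_ab; by exists y''; left.
- case: (classic (exists y'', A (a, y''))) => [[y'' Ay'']|not_dom_a].
    by exists y''; left.
  have E : a = x by apply: anti (x_min a not_dom_a); rewrite -E1.
  by exists y; right; rewrite /= E.
Qed.

Lemma total_extendable_embedding (G : U -> U -> Prop) :
  extendable G -> (forall a, exists y, G a y) ->
  exists f : U -> U, injective f /\
    (forall s (a : 'I_(ar L s) -> U), uprel s a <-> uprel s (fun k => f (a k))) /\
    forall u, internal_mem (f u).
Proof.
move=> extG G_total.
pose f a := proj1_sig (constructive_indefinite_description _ (G_total a)).
have fG a : G a (f a) by rewrite /f; case: constructive_indefinite_description.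
exists f; split; last split.
- move=> a1 a2 E.
  have [h [agree _ h_eq _]] := extG bool (fun b => if b then a1 else a2).
  by apply: (proj1 (h_eq true false)); rewrite (agree true _ (fG a1)) (agree false _ (fG a2)).
- move=> s a; have [h [agree _ _ h_rel]] := extG 'I_(ar L s) a.
  rewrite (h_rel s id).
  by rewrite (functional_extensionality _ _ (fun k => agree k _ (fG (a k)))).
- move=> u; have [h [agree h_int _ _]] := extG unit (fun _ => u).
  by rewrite -(agree tt _ (fG u)); apply: h_int.
Qed.

Lemma internal_self_embedding (le : U -> U -> Prop) :
  omega1_order le -> extendable (fun _ _ => False) ->
  exists f : U -> U, injective f /\
    (forall s (a : 'I_(ar L s) -> U), uprel s a <-> uprel s (fun k => f (a k))) /\
    forall u, internal_mem (f u).
Proof.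
move=> le_omega1 ext0.
have [A [A_adm A_max]] := admissible_maximal le ext0.
apply: (total_extendable_embedding (proj1 A_adm)).
exact: maximal_admissible_total le_omega1 A_adm A_max.
Qed.

Lemma finite_internal_coords (Y : U -> Prop) :
  finite_set _ Y -> (forall a, Y a -> internal_mem a) ->
  D (fun t => subset_of _ (coord_set L D M Y t) (B t)).
Proof.
move=> [lY lY_spec] Y_int.
have lY_int a : List.In a lY -> internal_mem a by move/lY_spec; apply: Y_int.
suff /(filterS HD) : D (fun t => forall a, List.In a lY -> B t (rep a t)).
  by apply=> t lY_B y [a [Ya <-]]; apply/lY_B/lY_spec.
move: lY_int; clear lY_spec; elim: lY => [|a r IH] r_int; first exact: filterT.
have r_B := IH (fun b rb => r_int b (or_intror rb)).
apply: (filterS HD (filterI HD (r_int a (or_introl erefl)) r_B)) => t [Ba Br] b.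
by case=> [<-|/Br].
Qed.

End Saturation.

(* At each coordinate t we find a window
   W_t (a copy in M_t of some M_(upper i)) on whose copies of A the colouring
   ct t takes at most l values, and which absorbs every M_j, j <= level t;
   the level tends to infinity along D, so the empty map is extendable into
   the internal set prod_t W_t / D. *)
Section RamseyTransfer.
Variable L : signature.
Variable D : (nat -> Prop) -> Prop.
Variable M : nat -> FStruct L.
Variable XA : car (ultraproduct L D M) -> Prop.
Hypothesis HD : nonprincipal_ultrafilter D.
Hypothesis Htr : trending L D M.
Variable dflt : forall t, fcar (M t).
Variable l : nat.
Hypothesis small_l : small_RD_prop L (ultraproduct L D M) XA l.
Variable k : nat.
Variable ct : forall t, (fcar (M t) -> Prop) -> 'I_k.
Arguments ct : clear implicits.

Local Notation U := (upcar L D M).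
Local Notation N := (ultraproduct L D M).
Local Notation rep := (uprep L D M).

Lemma upper_exists i : exists t, forall j : 'I_i.+1, embeds L (M j) (M t).
Proof.
by case: Htr => _ _ embD; apply: (filter_witness HD); apply: filter_bigI => // j.
Qed.

Definition upper i := proj1_sig (constructive_indefinite_description _ (upper_exists i)).

Lemma upper_spec i (j : 'I_i.+1) : embeds L (M j) (M (upper i)).
Proof. by rewrite /upper; case: constructive_indefinite_description => t /=. Qed.

Lemma upper_age i : in_age L N (M (upper i)).
Proof. by apply/(age_ultraproduct HD dflt); case: Htr. Qed.

Lemma witness_exists i : exists C : FStruct L,
  in_age L N C /\ ramsey_arrow XA k l C (M (upper i)).
Proof. exact: small_l k (M (upper i)) (upper_age i). Qed.

Definition witness i := proj1_sig (constructive_indefinite_description _ (witness_exists i)).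

Lemma witness_spec i : in_age L N (witness i) /\ ramsey_arrow XA k l (witness i) (M (upper i)).
Proof. by rewrite /witness; case: constructive_indefinite_description. Qed.

Definition stage i t := (forall j : 'I_i.+1, embeds L (witness j) (M t)) /\ i <= t.

Lemma stage_large i : D (stage i).
Proof.
apply: (filterI HD _ (filter_tail HD i)); apply: filter_bigI => // j.
exact/(age_ultraproduct HD dflt)/(proj1 (witness_spec j)).
Qed.

Lemma stage0 j t : stage j t -> stage 0 t.
Proof. by move=> [emb _]; split=> // i; rewrite (ord1 i); apply: (emb ord0). Qed.

Definition level t := max_below (stage^~ t) t.

Definition window_spec t (W : fcar (M t) -> Prop) (S : {set 'I_k}) :=
  [/\ #|S| <= l,
      (forall Y : fcar (M t) -> Prop, is_copy L (M t) N XA Y -> subset_of _ Y W -> ct t Y \in S)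
    & forall j, j <= level t -> exists g : fcar (M j) -> fcar (M t),
        @is_emb L (M j) (M t) g /\ forall u, W (g u)].
Arguments window_spec : clear implicits.

(* At level i, the witness i embeds into M_t and carries, by the Ramsey
   arrow, a copy of M_(upper i) with at most l colours; each M_j, j <= i,
   embeds into that copy. *)
Lemma window_exists t : stage 0 t ->
  exists p : (fcar (M t) -> Prop) * {set 'I_k}, window_spec t p.1 p.2.
Proof.
move=> stage0_t; have [_ [witness_emb _]] := max_below_spec (P := stage^~ t) stage0_t (leq0n t).
set i := level t in witness_emb *.
have [gam gam_emb] := witness_emb ord_max.
have [W [W_copy [S [S_card S_col]]]] := ramsey_arrow_emb gam_emb (proj2 (witness_spec i)) (ct t).
exists (W, S); split=> // j le_ji.
have [g g_emb] := upper_spec (Ordinal (le_ji : j < i.+1)).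
exact: emb_into_copy g_emb W_copy.
Qed.

Definition window t : (fcar (M t) -> Prop) * {set 'I_k} :=
  match excluded_middle_informative (stage 0 t) with
  | left h => proj1_sig (constructive_indefinite_description _ (window_exists h))
  | right _ => (fun _ => True, set0) end.

Lemma windowP t : stage 0 t -> window_spec t (window t).1 (window t).2.
Proof.
by rewrite /window => h; case: excluded_middle_informative => // h';
   case: constructive_indefinite_description.
Qed.

Lemma window_absorbs j t : stage j t -> exists g : fcar (M j) -> fcar (M t),
  @is_emb L (M j) (M t) g /\ forall u, (window t).1 (g u).
Proof.
move=> stage_j; have [_ _ absorb] := windowP (stage0 stage_j); apply: absorb.
exact: (proj1 (max_below_spec (P := stage^~ t) stage_j (proj2 stage_j))).
Qed.

(* Any finite family realises, by Łoś, its type in some factor M_j; pushing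
   the family through the embeddings of M_j into the windows at the
   coordinates of stage j gives an image in the internal set of windows. *)
Lemma empty_map_extendable :
  @extendable L D M (fun t => (window t).1) (fun _ _ => False).
Proof.
move=> I w.
have [j [los_eq los_rel]] := filter_witness HD (los HD w).
pose ka (i : I) : seqprod L M := fun t =>
  match excluded_middle_informative (stage j t) with
  | left h => proj1_sig (constructive_indefinite_description _ (window_absorbs h)) (rep (w i) j)
  | right _ => dflt t end.
have ka_type t : stage j t ->
    (forall i i', ka i t = ka i' t <-> w i = w i') /\
    (forall s b, uprel L D M s (fun k => w (b k)) <-> frel (M t) s (fun k => ka (b k) t)).
  rewrite /ka; case: excluded_middle_informative => // h _.
  case: constructive_indefinite_description => g /= [[g_inj g_rel] _].
  by split=> [i i'|s b]; [rewrite los_eq; split=> [/g_inj|->] | rewrite los_rel; apply: g_rel].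
have [ka_eq ka_rel] := los_realize HD (stage_large j) ka_type.
exists (fun i => upclass D (ka i)); split=> // i.
apply: (filterS HD (filterI HD (stage_large j) (uprep_upclass HD (ka i)))) => t [stage_t <-].
rewrite /ka; case: excluded_middle_informative => // h.
by case: constructive_indefinite_description => g /= [_ gW].
Qed.

Lemma internal_coloring_bounded (ch : CH) (finXA : finite_set _ XA)
  (c : (U -> Prop) -> 'I_k) (Z : nat -> Prop)
  (c_int : forall Y : U -> Prop, is_copy L N N XA Y -> forall j : 'I_k,
     c Y = j <-> D (fun t => [/\ Z t, sub_iso L (M t) N (coord_set L D M Y t) Y
                                & ct t (coord_set L D M Y t) = j])) :
  exists f : U -> U,
    (injective f /\ forall (s : sym L) (a : 'I_(ar L s) -> U),
                      uprel L D M s a <-> uprel L D M s (fun i => f (a i))) /\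
    exists S : {set 'I_k}, #|S| <= l /\
      forall Y : U -> Prop, is_copy L N N XA Y ->
        subset_of _ Y (fun y => exists x, f x = y) -> c Y \in S.
Proof.
have [S0 DS0] := ultra_pigeonhole HD (fun t => (window t).2) (stage_large 0).
have [le le_omega1] := CH_omega1_order (@upcar_code_inj L D M) ch.
have [f [f_inj [f_rel f_int]]] := internal_self_embedding HD le_omega1 empty_map_extendable.
exists f; split=> //; exists S0; split.
  by have [t [stage_t <-]] := filter_witness HD DS0; have [] := windowP stage_t.
move=> Y Y_copy Y_img.
have Y_int a : Y a -> @internal_mem L D M (fun t => (window t).1) a.
  by move=> /Y_img [x <-]; apply: f_int.
have Y_windowD := finite_internal_coords HD (sub_iso_finite finXA Y_copy) Y_int.
have [t [[[stage_t S_t] Y_window] [_ Y_coord ct_Y]]] := filter_witness HD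
  (filterI HD (filterI HD DS0 Y_windowD)
              (proj1 (c_int Y Y_copy (c Y)) erefl)).
have [_ S_col _] := windowP stage_t.
rewrite -ct_Y -S_t; apply: S_col => //.
exact: sub_iso_comp Y_copy (sub_iso_inv Y_coord).
Qed.

End RamseyTransfer.

(* The degenerate case of an empty ultraproduct: A is empty, a small Ramsey
   degree is at least 1 (colour the unique empty copy), and the identity
   embedding sees a single copy of A. *)
Lemma empty_ultraproduct_int_BRD (L : signature) (D : (nat -> Prop) -> Prop)
  (M : nat -> FStruct L) (XA : car (ultraproduct L D M) -> Prop) (l : nat) :
  (upcar L D M -> False) ->
  small_RD_prop L (ultraproduct L D M) XA l -> int_BRD_prop L D M XA l.
Proof.
move=> U_empty small_l.
have l_pos : 0 < l.
  pose Bv := FStructMk L void (fun s a => uprel L D M s (fun i => of_void _ (a i))).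
  have Bv_age : in_age L (ultraproduct L D M) Bv.
    by exists (of_void (upcar L D M)); split; [case | ].
  have [C [[g [g_inj g_rel]] arrowC]] := small_l 1 Bv Bv_age.
  have [B' [_ [S [S_card S_col]]]] := arrowC (fun _ => ord0).
  have empty_copy : is_copy L C (ultraproduct L D M) XA (fun _ => False).
    exists (fun x => match U_empty (proj1_sig x) with end).
    split=> [x|x|//|s a]; try by case: (U_empty (proj1_sig x)).
    rewrite (g_rel s); have -> // : (fun i => g (match U_empty (proj1_sig (a i)) with end)) =
                                   (fun i => proj1_sig (a i)).
    by apply: functional_extensionality => i; case: (U_empty (proj1_sig (a i))).
  apply: leq_trans S_card; apply/card_gt0P; exists ord0.
  by apply: S_col empty_copy _ => ? [].
move=> k c _; exists id; split; first by split=> // s a.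
exists [set c (fun _ => False)]; split; first by rewrite cards1.
move=> Y _ _; suff -> : Y = (fun _ => False) by rewrite set11.
by apply: functional_extensionality => u; case: (U_empty u).
Qed.

Lemma int_BRD_of_small_RD (L : signature) (D : (nat -> Prop) -> Prop)
  (M : nat -> FStruct L) (XA : car (ultraproduct L D M) -> Prop) (l : nat) :
  CH -> nonprincipal_ultrafilter D -> trending L D M -> finite_set _ XA ->
  small_RD_prop L (ultraproduct L D M) XA l -> int_BRD_prop L D M XA l.
Proof.
move=> ch HD Htr finXA small_l.
case: (classic (forall t, exists y : fcar (M t), True)) => [inhabited|not_inhabited].
- pose dflt t := proj1_sig (constructive_indefinite_description _ (inhabited t)).
  move=> k c [Z [_ [ct c_int]]].
  exact: (internal_coloring_bounded HD Htr dflt small_l ch finXA c_int).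
- apply: empty_ultraproduct_int_BRD small_l => u.
  by have [t0 no_elt] := not_all_ex_not _ _ not_inhabited; apply: no_elt; exists (uprep L D M u t0).
Qed.

Theorem mainTheorem6 (L : signature) (D : (nat -> Prop) -> Prop)
  (M : nat -> FStruct L) (XA : car (ultraproduct L D M) -> Prop) :
  CH ->
  nonprincipal_ultrafilter D ->
  trending L D M ->
  finite_set _ XA ->
  finite_small_RD L (ultraproduct L D M) XA ->
  finite_int_BRD L D M XA /\
  (forall d T : nat,
      least (small_RD_prop L (ultraproduct L D M) XA) d ->
      least (int_BRD_prop L D M XA) T ->
      T <= d).
Proof.
move=> ch HD Htr finXA [l small_l]; split.
- by exists l; apply: int_BRD_of_small_RD.
- move=> d T [small_d _] [_ T_least]; apply: T_least.
  exact: int_BRD_of_small_RD small_d.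
Qed.
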